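(* Let $\mathcal{H}$ and $\mathcal{K}$ be finite-dimensional complex Hilbert spaces with $\dim\mathcal{H}\ge 2$. Let $\mathcal{HP}$ be the set of all Hermitian-preserving trace-preserving linear maps $B(\mathcal{H})\to B(\mathcal{K})$, and $\mathcal{SP},\mathcal{SN}\subseteq\mathcal{HP}$ the subsets of SP and SN maps. Then $\operatorname{Conv}(\mathcal{SP})=\operatorname{Conv}(\mathcal{SN})=\mathcal{HP}$, where $\operatorname{Conv}$ denotes the convex hull.
   Context: $B(\mathcal{H})$ denotes all linear operators on $\mathcal{H}$; a density matrix is a positive semidefinite operator of trace one. A map is Hermitian-preserving if $\Psi(X^\dagger)=\Psi(X)^\dagger$ and trace-preserving if $\operatorname{Tr}\Psi(X)=\operatorname{Tr}X$. An HPTP map $\Psi$ is SP if there is an invertible density matrix $\rho\in B(\mathcal{H})$ such that $\Psi(\rho)$ is an invertible density matrix; it is SN if there is a density matrix $\rho$ such that $\Psi(\rho)$ is a density matrix. *)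

From HB Require Import structures.
From mathcomp Require Import all_boot all_order all_algebra.
From mathcomp Require Import complex.
From mathcomp Require Import reals.
Set Implicit Arguments. Unset Strict Implicit. Unset Printing Implicit Defensive.
Import Order.TTheory GRing.Theory Num.Theory.
Local Open Scope ring_scope.

(* B(C^n) is modelled by 'M[R[i]]_n, R : realType (the real numbers),
   R[i] the complex numbers. *)
Section QDefs.
Variable R : realType.
Local Notation C := R[i].

Definition adjmx (n : nat) (X : 'M[C]_n) : 'M[C]_n := (map_mx Num.conj X)^T.

Definition hermitian_mx (n : nat) (A : 'M[C]_n) : Prop := adjmx A = A.

Definition psd_mx (n : nat) (A : 'M[C]_n) : Prop :=
  hermitian_mx A /\
  forall v : 'cV[C]_n, 0 <= ((map_mx Num.conj v)^T *m A *m v) 0 0.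

Definition density_mx (n : nat) (A : 'M[C]_n) : Prop :=
  psd_mx A /\ \tr A = 1.

Definition HPTP (n m : nat) (Psi : 'M[C]_n -> 'M[C]_m) : Prop :=
  (forall (a : C) (X Y : 'M[C]_n), Psi (a *: X + Y) = a *: Psi X + Psi Y) /\
  (forall X, Psi (adjmx X) = adjmx (Psi X)) /\
  (forall X, \tr (Psi X) = \tr X).

Definition SP_map (n m : nat) (Psi : 'M[C]_n -> 'M[C]_m) : Prop :=
  HPTP Psi /\
  exists rho : 'M[C]_n, [/\ density_mx rho, rho \in unitmx,
                           density_mx (Psi rho) & Psi rho \in unitmx].

Definition SN_map (n m : nat) (Psi : 'M[C]_n -> 'M[C]_m) : Prop :=
  HPTP Psi /\
  exists rho : 'M[C]_n, density_mx rho /\ density_mx (Psi rho).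

Definition conv_hull (n m : nat) (S : ('M[C]_n -> 'M[C]_m) -> Prop)
  (Phi : 'M[C]_n -> 'M[C]_m) : Prop :=
  exists (k : nat) (w : 'I_k -> R) (Psi : 'I_k -> 'M[C]_n -> 'M[C]_m),
    [/\ forall j, 0 <= w j, \sum_j w j = 1, forall j, S (Psi j) &
        Phi = (fun X => \sum_j ((w j)%:C)%C *: Psi j X)].
End QDefs.

From HB Require Import structures.
From mathcomp Require Import all_boot all_order all_algebra.
From mathcomp Require Import complex reals.
From Stdlib Require Import FunctionalExtensionality.
From mathcomp Require Import ring lra.
Set Implicit Arguments. Unset Strict Implicit. Unset Printing Implicit Defensive.
Import Order.TTheory GRing.Theory Num.Theory.
Local Open Scope ring_scope.

(* Every HPTP map Phi is the midpoint of Psi and 2 Phi - Psi, for any HPTP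
   map Psi.  Since dim H >= 2 there are faithful states rho1, rho2 and a
   Hermitian functional d with d rho1 = 0 and d rho2 = 1.  For a faithful
   state sigma of K, the measure-and-prepare map
     Psi X = (tr X - d X) sigma + d X (2 Phi rho2 - sigma)
   is HPTP and sends rho1 to sigma, while 2 Phi - Psi sends rho2 to sigma:
   both are SP, hence SN.  Conversely, convex combinations of HPTP maps are
   HPTP. *)

Section Quantum.
Variable R : realType.
Local Notation C := R[i].

Lemma adjmxE n (A : 'M[C]_n) i j : adjmx A i j = (A j i)^*.
Proof. by rewrite /adjmx !mxE. Qed.

Lemma adjmxD n (A B : 'M[C]_n) : adjmx (A + B) = adjmx A + adjmx B.
Proof. by apply/matrixP=> i j; rewrite !adjmxE !mxE rmorphD. Qed.

Lemma adjmxZ n a (A : 'M[C]_n) : adjmx (a *: A) = a^* *: adjmx A.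
Proof. by apply/matrixP=> i j; rewrite !adjmxE !mxE rmorphM. Qed.

Lemma adjmxN n (A : 'M[C]_n) : adjmx (- A) = - adjmx A.
Proof. by rewrite -scaleN1r adjmxZ rmorphN1 scaleN1r. Qed.

Lemma adjmx_sum n k (F : 'I_k -> 'M[C]_n) :
  adjmx (\sum_j F j) = \sum_j adjmx (F j).
Proof.
apply: (big_morph _ (@adjmxD n)).
by apply/matrixP=> i j; rewrite adjmxE !mxE rmorph0.
Qed.

Lemma mxtrace_adjmx n (A : 'M[C]_n) : \tr (adjmx A) = (\tr A)^*.
Proof. by rewrite /mxtrace rmorph_sum; apply: eq_bigr => i _; rewrite adjmxE. Qed.

Lemma conj_real_complex (r : R) : (r%:C)%C^* = (r%:C)%C.
Proof. by apply: conj_Creal; apply/complex_realP; exists r. Qed.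

Definition faithful_state k (rho : 'M[C]_k) := density_mx rho /\ rho \in unitmx.

Lemma faithful_state_diag_mx k (d : 'rV[C]_k) :
  (forall i, 0 < d 0 i) -> \sum_i d 0 i = 1 -> faithful_state (diag_mx d).
Proof.
move=> d_gt0 d_sum1; split; last first.
  by rewrite unitmxE det_diag unitfE; apply/prodf_neq0 => i _; rewrite gt_eqF.
split; last by rewrite mxtrace_diag.
split=> [|v].
  apply/matrixP=> i j; rewrite adjmxE !mxE.
  have [->|_] := eqVneq i j; last by rewrite !mulr0n rmorph0.
  by rewrite !mulr1n conj_Creal // gtr0_real.
rewrite mul_mx_diag mxE; apply: sumr_ge0 => j _; rewrite !mxE mulrAC.
by rewrite mulr_ge0 ?(ltW (d_gt0 j)) // mulrC mul_conjC_ge0.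
Qed.

Definition maxmix k : 'M[C]_k := (k%:R^-1)%:M.

Lemma faithful_state_maxmix k : faithful_state (maxmix k.+1).
Proof.
rewrite /maxmix -diag_const_mx; apply: faithful_state_diag_mx => [i|].
  by rewrite mxE invr_gt0 ltr0n.
under eq_bigr => i _ do rewrite mxE.
by rewrite sumr_const card_ord -(mulr_natl (_^-1)) mulfV ?pnatr_eq0.
Qed.

Definition tilted_state k : 'M[C]_k.+2 :=
  diag_mx (\row_i ((1 + (i == ord0)%:R) / k.+3%:R)).

Lemma faithful_state_tilted k : faithful_state (tilted_state k).
Proof.
apply: faithful_state_diag_mx => [i|].
  by rewrite mxE divr_gt0 ?ltr0n // ltr_pwDl ?ler0n.
under eq_bigr => i _ do rewrite mxE.
rewrite -mulr_suml big_split /= sumr_const card_ord (bigD1 ord0) //= big1 ?addr0.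
  by rewrite natr1 mulfV ?pnatr_eq0.
by move=> i /negbTE ->.
Qed.

Definition hermitian_functional n (d : 'M[C]_n -> C) :=
  (forall a X Y, d (a *: X + Y) = a * d X + d Y) /\
  (forall X, d (adjmx X) = (d X)^*).

Definition diag_gap k (X : 'M[C]_k.+2) : C :=
  k.+3%:R * (X ord0 ord0 - X ord_max ord_max).

Lemma hermitian_functional_diag_gap k : hermitian_functional (@diag_gap k).
Proof.
split=> [a X Y|X]; rewrite /diag_gap ?adjmxE ?mxE; first by ring.
by rewrite rmorphM rmorphB rmorph_nat.
Qed.

Lemma diag_gap_maxmix k : diag_gap (maxmix k.+2) = 0.
Proof. by rewrite /diag_gap !mxE !eqxx subrr mulr0. Qed.

Lemma diag_gap_tilted k : diag_gap (tilted_state k) = 1.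
Proof.
rewrite /diag_gap !mxE !eqxx /= !mulr1n addr0 -mulrBl addrK mul1r.
by rewrite mulfV ?pnatr_eq0.
Qed.

Section Maps.
Variables n m : nat.
Implicit Types Phi Psi : 'M[C]_n -> 'M[C]_m.

Lemma HPTP_affine_sum k (w : 'I_k -> R) (Psi : 'I_k -> 'M[C]_n -> 'M[C]_m) :
  (forall j, HPTP (Psi j)) -> \sum_j w j = 1 ->
  HPTP (fun X => \sum_j (w j)%:C%C *: Psi j X).
Proof.
move=> HPsi w_sum1; split; [|split] => [a X Y|X|X].
- rewrite scaler_sumr -big_split; apply: eq_bigr => j _.
  by have [-> _] := HPsi j; rewrite scalerDr !scalerA mulrC.
- rewrite adjmx_sum; apply: eq_bigr => j _.
  by have [_ [-> _]] := HPsi j; rewrite adjmxZ conj_real_complex.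
- rewrite linear_sum /=.
  under eq_bigr => j _ do rewrite mxtraceZ (HPsi j).2.2.
  by rewrite -mulr_suml -rmorph_sum w_sum1 mul1r.
Qed.

Lemma conv_hull_HPTP (S : ('M[C]_n -> 'M[C]_m) -> Prop) Phi :
  (forall Psi, S Psi -> HPTP Psi) -> conv_hull S Phi -> HPTP Phi.
Proof.
move=> SH [k [w [Psi [_ w_sum1 SPsi ->]]]].
by apply: HPTP_affine_sum => // j; apply: SH.
Qed.

Lemma conv_hull_sub (S T : ('M[C]_n -> 'M[C]_m) -> Prop) Phi :
  (forall Psi, S Psi -> T Psi) -> conv_hull S Phi -> conv_hull T Phi.
Proof.
move=> ST [k [w [Psi [w_ge0 w_sum1 SPsi ->]]]].
by exists k, w, Psi; split=> // j; apply: ST.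
Qed.

Lemma HPTP_reflect Phi Psi :
  HPTP Phi -> HPTP Psi -> HPTP (fun X => 2%:R *: Phi X - Psi X).
Proof.
move=> [linPhi [hpPhi trPhi]] [linPsi [hpPsi trPsi]]; split; [|split] => [a X Y|X|X].
- by rewrite linPhi linPsi opprD !scalerDr scalerN addrACA !scalerA mulrC.
- by rewrite hpPhi hpPsi adjmxD adjmxN adjmxZ rmorph_nat.
- by rewrite linearB /= mxtraceZ trPhi trPsi mulr_natl mulr2n addrK.
Qed.

Lemma conv_hull_midpoint (S : ('M[C]_n -> 'M[C]_m) -> Prop) Psi1 Psi2 :
  S Psi1 -> S Psi2 -> conv_hull S (fun X => 2^-1 *: (Psi1 X + Psi2 X)).
Proof.
move=> S1 S2; exists 2, (fun _ => 2^-1), (fun j => if j == ord0 then Psi1 else Psi2).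
split=> [j||[[|[|]]] //|].
- by rewrite invr_ge0 ler0n.
- by rewrite big_ord_recl big_ord1; lra.
- apply: functional_extensionality => X.
  by rewrite big_ord_recl big_ord1 /= scalerDr fmorphV rmorph_nat.
Qed.

Lemma HPTP_interpolate (d : 'M[C]_n -> C) (A B : 'M[C]_m) :
  hermitian_functional d -> hermitian_mx A -> hermitian_mx B ->
  \tr A = 1 -> \tr B = 1 -> HPTP (fun X => (\tr X - d X) *: A + d X *: B).
Proof.
move=> [lin_d hp_d] hA hB trA trB; split; [|split] => [a X Y|X|X].
- rewrite lin_d mxtraceD mxtraceZ scalerDr !scalerA addrACA -!scalerDl.
  by congr (_ *: _ + _ *: _); ring.
- by rewrite mxtrace_adjmx hp_d adjmxD !adjmxZ hA hB rmorphB.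
- by rewrite mxtraceD !mxtraceZ trA trB !mulr1 subrK.
Qed.

Lemma conv_hull_SP_HPTP (d : 'M[C]_n -> C) rho1 rho2 (sigma : 'M[C]_m) Phi :
  hermitian_functional d -> d rho1 = 0 -> d rho2 = 1 ->
  faithful_state rho1 -> faithful_state rho2 -> faithful_state sigma ->
  HPTP Phi -> conv_hull (@SP_map R n m) Phi.
Proof.
move=> hd d_rho1 d_rho2 [dr1 u1] [dr2 u2] [dsigma usigma] HPhi.
have [_ [hpPhi trPhi]] := HPhi.
pose tau := 2%:R *: Phi rho2 - sigma.
pose Psi X := (\tr X - d X) *: sigma + d X *: tau.
have HPsi : HPTP Psi.
  apply: HPTP_interpolate => //; [exact: dsigma.1.1 | | exact: dsigma.2 |].
    by rewrite /hermitian_mx adjmxD adjmxN adjmxZ rmorph_nat -hpPhi dr2.1.1 dsigma.1.1.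
  by rewrite linearB /= mxtraceZ trPhi dr2.2 dsigma.2 mulr1 mulr2n addrK.
have Psi_rho1 : Psi rho1 = sigma.
  by rewrite /Psi d_rho1 dr1.2 subr0 scale1r scale0r addr0.
have Psi_rho2 : 2%:R *: Phi rho2 - Psi rho2 = sigma.
  by rewrite /Psi d_rho2 dr2.2 subrr scale0r add0r scale1r /tau opprB addrC subrK.
have -> : Phi = fun X => 2^-1 *: (Psi X + (2%:R *: Phi X - Psi X)).
  apply: functional_extensionality => X.
  by rewrite addrC subrK scalerA mulVf ?pnatr_eq0 ?scale1r.
apply: conv_hull_midpoint.
- by split=> //; exists rho1; rewrite Psi_rho1.
- split; first exact: HPTP_reflect.
  by exists rho2; rewrite Psi_rho2.
Qed.

End Maps.

Lemma SP_map_SN n m (Psi : 'M[C]_n -> 'M[C]_m) : SP_map Psi -> SN_map Psi.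
Proof. by case=> HPsi [rho [? _ ? _]]; split=> //; exists rho. Qed.

Lemma HPTP_dim_gt0 n m (Phi : 'M[C]_n -> 'M[C]_m) :
  (0 < n)%N -> HPTP Phi -> (0 < m)%N.
Proof.
case: m Phi => // Phi n_gt0 [_ [_ trPhi]].
have := trPhi 1; rewrite mxtrace1 /mxtrace big_ord0 => /eqP.
by rewrite eq_sym pnatr_eq0 => /eqP n0; rewrite n0 in n_gt0.
Qed.

End Quantum.

Theorem proposition3 (R : realType) (n m : nat) (hn : (2 <= n)%N) :
  (forall Phi : 'M[R[i]]_n -> 'M[R[i]]_m,
     conv_hull (@SP_map R n m) Phi <-> HPTP Phi) /\
  (forall Phi : 'M[R[i]]_n -> 'M[R[i]]_m,
     conv_hull (@SN_map R n m) Phi <-> HPTP Phi).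
Proof.
have HPTP_conv_SP Phi : HPTP Phi -> conv_hull (@SP_map R n m) Phi.
  move=> HPhi; have := HPTP_dim_gt0 (ltnW hn) HPhi.
  case: n hn Phi HPhi => [|[|k]] // _; case: m => // l Phi HPhi _.
  apply: (conv_hull_SP_HPTP (hermitian_functional_diag_gap R k)
    (diag_gap_maxmix R k) (diag_gap_tilted R k) (faithful_state_maxmix R k.+1)
    (faithful_state_tilted R k) (faithful_state_maxmix R l) HPhi).
split=> Phi; split; [| exact: HPTP_conv_SP | | move/HPTP_conv_SP].
- by apply: conv_hull_HPTP => Psi [].
- by apply: conv_hull_HPTP => Psi [].
- by apply: conv_hull_sub; apply: SP_map_SN.
Qed.
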